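(* Let $p\in\mathbb{R}$ and $\gamma>0$. Let $z=(v,m,\sigma,e)\in Z$ satisfy $m\ne(e+p)v$, $2e-|v|^2>0$, $M(z)=0$, $e<\gamma$ and \[\left|\frac{(m-(e+p)v)(2\gamma-|v|^2)}{(\gamma-e)(2e-|v|^2)}-v\right|\le\sqrt{2\gamma}.\] Then $z\in K_\gamma^{\Lambda,1}$.
   Context: $\mathcal S_0^{2\times2}$ is the space of traceless symmetric $2\times2$ matrices, $Z:=\mathbb{R}^2\times\mathbb{R}^2\times\mathcal S_0^{2\times2}\times\mathbb{R}$, $K_\gamma:=\{z\in Z: v\otimes v-\sigma=e\,\mathrm{Id},\ m=(e+p)v,\ e\le\gamma\}$. The wave cone is $\Lambda=\{\bar z=(\bar v,\bar m,\bar\sigma,\bar e)\in Z:\ (\bar v,\bar e)\neq0\text{ and there is }0\ne(\xi,c)\in\mathbb{R}^2\times\mathbb{R}\text{ with }(\bar\sigma+\bar e\,\mathrm{Id})\xi+c\bar v=0,\ \bar v\cdot\xi=0,\ \bar m\cdot\xi+c\bar e=0\}$. $K_\gamma^{\Lambda,1}:=K_\gamma\cup\{sz_1+(1-s)z_2: z_1,z_2\in K_\gamma,\ s\in[0,1],\ z_1-z_2\in\Lambda\}$. For $z$ with $m\ne(e+p)v$, $\eta(z):=\frac{m-(e+p)v}{|m-(e+p)v|}$ and $M(z):=v\otimes v-\sigma-e\,\mathrm{Id}+(2e-|v|^2)\eta(z)\otimes\eta(z)$. *)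

From HB Require Import structures.
From mathcomp Require Import all_boot all_order all_algebra.
From mathcomp Require Import reals.
Set Implicit Arguments. Unset Strict Implicit. Unset Printing Implicit Defensive.
Import Order.TTheory GRing.Theory Num.Theory.
Local Open Scope ring_scope.

Section Defs.
Variable R : realType.

(* The carrier is all of R^2 x R^2 x M_2 x R; membership in Z additionally
   requires sigma symmetric and traceless (predicate in_Z). *)
Record Zpt := mkZ { zv : 'cV[R]_2; zm : 'cV[R]_2; zs : 'M[R]_2; ze : R }.

Definition in_Z (z : Zpt) : Prop := (zs z)^T = zs z /\ \tr (zs z) = 0.

Definition dot (u w : 'cV[R]_2) : R := (u^T *m w) 0 0.
Definition vnorm (u : 'cV[R]_2) : R := Num.sqrt (dot u u).
Definition tens (u w : 'cV[R]_2) : 'M[R]_2 := u *m w^T.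

Definition zsub (z1 z2 : Zpt) : Zpt :=
  mkZ (zv z1 - zv z2) (zm z1 - zm z2) (zs z1 - zs z2) (ze z1 - ze z2).

Definition zcomb (s : R) (z1 z2 : Zpt) : Zpt :=
  mkZ (s *: zv z1 + (1 - s) *: zv z2) (s *: zm z1 + (1 - s) *: zm z2)
      (s *: zs z1 + (1 - s) *: zs z2) (s * ze z1 + (1 - s) * ze z2).

Definition Kg (p gamma : R) (z : Zpt) : Prop :=
  [/\ in_Z z,
      tens (zv z) (zv z) - zs z = ze z *: 1%:M,
      zm z = (ze z + p) *: zv z
    & ze z <= gamma].

Definition Lambda (zb : Zpt) : Prop :=
  [/\ in_Z zb,
      ~ (zv zb = 0 /\ ze zb = 0)
    & exists (xi : 'cV[R]_2) (c : R), (xi <> 0 \/ c <> 0) /\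
        (zs zb + ze zb *: 1%:M) *m xi + c *: zv zb = 0 /\
        dot (zv zb) xi = 0 /\
        dot (zm zb) xi + c * ze zb = 0].

Definition KLambda1 (p gamma : R) (z : Zpt) : Prop :=
  Kg p gamma z \/
  exists (z1 z2 : Zpt) (s : R),
    [/\ Kg p gamma z1, Kg p gamma z2, 0 <= s <= 1,
        Lambda (zsub z1 z2) & z = zcomb s z1 z2].

Definition defect (p : R) (z : Zpt) : 'cV[R]_2 := zm z - (ze z + p) *: zv z.

(* eta(z), meaningful when m <> (e+p) v *)
Definition eta (p : R) (z : Zpt) : 'cV[R]_2 := (vnorm (defect p z))^-1 *: defect p z.

Definition Mz (p : R) (z : Zpt) : 'M[R]_2 :=
  tens (zv z) (zv z) - zs z - ze z *: 1%:M
  + (2 * ze z - vnorm (zv z) ^+ 2) *: tens (eta p z) (eta p z).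

End Defs.

From Pilot Require Import Defs.
From HB Require Import structures.
From mathcomp Require Import all_boot all_order all_algebra.
From mathcomp Require Import reals.
From mathcomp Require Import ring lra.
Set Implicit Arguments. Unset Strict Implicit. Unset Printing Implicit Defensive.
Import Order.TTheory GRing.Theory Num.Theory.
Local Open Scope ring_scope.

(* Since M(z) = 0 and d := m - (e+p)v = |d| eta, we have
   sigma = v (x) v - e Id + (2e - |v|^2) eta (x) eta and m = (e+p)v + |d| eta.
   Choose a, b > 0 with ab = 2e - |v|^2 and ab(b - a + 2 v.eta)/2 = |d|; then z is
   the barycentre, with weights a/(a+b) and b/(a+b), of the points of K with
   velocities v + b eta and v - a eta, and in the plane any two points of K with
   distinct velocities differ by a wave-cone vector.  The energy of v - a eta is
   below e, and the hypothesis on the norm is exactly what keeps the energy of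
   v + b eta below gamma. *)

Lemma endpoint_energy_le (R : realFieldType) (a b c G : R) :
  0 < a -> 0 < b -> 0 < G -> 0 < b - a + 2 * c ->
  let mu := (2 * G + a * b) * (b - a + 2 * c) / (2 * G) in
  mu ^+ 2 - 2 * mu * c <= 2 * G + a * b -> b * (b - a + 2 * c) <= 2 * G.
Proof.
move=> a_gt0 b_gt0 G_gt0; set K := b - a + 2 * c => K_gt0 mu.
pose B := 2 * G / K.
have B_gt0 : 0 < B by rewrite divr_gt0 //; lra.
have P_gt0 : 0 < 2 * G + a * b by nra.
have Q_gt0 : 0 < (2 * G + a * b) * (a + B) / B ^+ 2.
  by rewrite divr_gt0 ?exprn_gt0 // mulr_gt0 //; lra.
move=> bound.
have : (b - B) * ((2 * G + a * b) * (a + B) / B ^+ 2) <= 0.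
  suff -> : (b - B) * ((2 * G + a * b) * (a + B) / B ^+ 2)
          = mu ^+ 2 - 2 * mu * c - (2 * G + a * b) by lra.
  by rewrite /mu /B /K; field; rewrite (gt_eqF G_gt0) (gt_eqF K_gt0).
rewrite pmulr_lle0 // subr_le0 => b_le.
have -> : 2 * G = B * K by rewrite /B divfK //; lra.
by rewrite ler_pM2r.
Qed.

Lemma exists_pos_mul_sub (R : rcfType) (D k : R) : 0 < D ->
  exists a b, [/\ 0 < a, 0 < b, a * b = D & b - a = k].
Proof.
move=> D_gt0; pose r := Num.sqrt (k ^+ 2 + 4 * D).
have r2 : r ^+ 2 = k ^+ 2 + 4 * D by rewrite sqr_sqrtr //; nra.
have r_gtk : `|k| < r by rewrite /r -sqrtr_sqr ltr_sqrt; nra.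
exists ((r - k) / 2), ((r + k) / 2); split; last by field.
- by move: r_gtk; rewrite ltr_norml; lra.
- by move: r_gtk; rewrite ltr_norml; lra.
- have -> : D = (r ^+ 2 - k ^+ 2) / 4 by rewrite r2; field.
  by field.
Qed.

Section Plane.
Variable R : realType.
Implicit Types (u v w x : 'cV[R]_2) (p gamma : R) (z : Zpt R).

Lemma cV2P u w : u 0 0 = w 0 0 -> u 1 0 = w 1 0 -> u = w.
Proof.
move=> eq0 eq1; apply/matrixP => i j; rewrite (ord1 j).
suff [-> | ->] : i = 0 \/ i = 1 by [].
by case: i => [[|[|//]] ?]; [left | right]; exact: val_inj.
Qed.

Lemma dotE u w : dot u w = u 0 0 * w 0 0 + u 1 0 * w 1 0.
Proof.
rewrite /dot mxE !big_ord_recl big_ord0 addr0 !mxE (_ : lift ord0 ord0 = 1) //.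
exact: val_inj.
Qed.

Lemma tensE u w i j : tens u w i j = u i 0 * w j 0.
Proof. by rewrite /tens mxE big_ord1 mxE. Qed.

Lemma dotC u w : dot u w = dot w u.
Proof. by rewrite !dotE; ring. Qed.

Lemma dotDl u w x : dot (u + w) x = dot u x + dot w x.
Proof. by rewrite !dotE !mxE; ring. Qed.

Lemma dotBl u w x : dot (u - w) x = dot u x - dot w x.
Proof. by rewrite !dotE !mxE; ring. Qed.

Lemma dotZl a u w : dot (a *: u) w = a * dot u w.
Proof. by rewrite !dotE !mxE; ring. Qed.

Lemma dot_ge0 u : 0 <= dot u u.
Proof. by rewrite dotE addr_ge0 // -expr2 sqr_ge0. Qed.

Lemma vnorm_sqr u : vnorm u ^+ 2 = dot u u.
Proof. exact/sqr_sqrtr/dot_ge0. Qed.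

Lemma vnormN u : vnorm (- u) = vnorm u.
Proof. by rewrite /vnorm !dotE !mxE !mulrNN. Qed.

Lemma vnorm_gt0 u : u != 0 -> 0 < vnorm u.
Proof.
move=> u_neq0; rewrite sqrtr_gt0 lt0r dot_ge0 andbT; apply: contra u_neq0.
rewrite dotE -!expr2 paddr_eq0 ?sqr_ge0 // !sqrf_eq0 => /andP[/eqP u0 /eqP u1].
by apply/eqP/cV2P; rewrite mxE ?u0 ?u1.
Qed.

Lemma dot_unit_line u x t : dot x x = 1 ->
  dot (u + t *: x) (u + t *: x) = dot u u + 2 * t * dot u x + t ^+ 2.
Proof.
move=> x1; have -> : t ^+ 2 = t ^+ 2 * dot x x by rewrite x1 mulr1.
by rewrite !dotE !mxE; ring.
Qed.

Lemma tens_mulmx u w x : tens u w *m x = dot w x *: u.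
Proof. by rewrite /tens -mulmxA [w^T *m x]mx11_scalar mul_mx_scalar. Qed.

Lemma tens_tr u w : (tens u w)^T = tens w u.
Proof. by rewrite /tens trmx_mul trmxK. Qed.

Lemma tr_tens u w : \tr (tens u w) = dot w u.
Proof. by rewrite /tens mxtrace_mulC /mxtrace big_ord1. Qed.

Definition perp u : 'cV[R]_2 := \col_i (if i == 0 then - u 1 0 else u 0 0).

Lemma dot_perp u : dot u (perp u) = 0.
Proof. by rewrite dotE /perp !mxE /=; ring. Qed.

Lemma perp_eq0 u : perp u = 0 -> u = 0.
Proof.
move/matrixP => u0; apply: cV2P; rewrite mxE.
- by move: (u0 1 0); rewrite !mxE.
- by move: (u0 0 0); rewrite !mxE /= => /eqP; rewrite oppr_eq0 => /eqP.
Qed.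

Lemma dot_eta p z : defect p z != 0 -> dot (Defs.eta p z) (Defs.eta p z) = 1.
Proof.
move=> /vnorm_gt0 d_gt0; rewrite /Defs.eta dotZl dotC dotZl -vnorm_sqr.
by field; rewrite gt_eqF.
Qed.

Lemma defect_eta p z : defect p z != 0 -> defect p z = vnorm (defect p z) *: Defs.eta p z.
Proof. by move=> /vnorm_gt0 d_gt0; rewrite /Defs.eta scalerA divff ?scale1r // gt_eqF. Qed.

Lemma zs_of_Mz_eq0 p z : Mz p z = 0 ->
  zs z = tens (zv z) (zv z) - ze z *: 1%:M
         + (2 * ze z - vnorm (zv z) ^+ 2) *: tens (Defs.eta p z) (Defs.eta p z).
Proof.
move/matrixP => M0; apply/matrixP => i j.
by move: (M0 i j); rewrite /Mz !mxE; lra.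
Qed.

Lemma in_Z_sub (z1 z2 : Zpt R) : in_Z z1 -> in_Z z2 -> in_Z (zsub z1 z2).
Proof.
by move=> [sym1 tr1] [sym2 tr2]; split; rewrite /= raddfB /= ?sym1 ?sym2 ?tr1 ?tr2 ?subr0.
Qed.

(* The point of K with velocity u: since sigma is traceless, every point of K_gamma
   has this form. *)
Definition Kpoint p u : Zpt R :=
  mkZ u ((dot u u / 2 + p) *: u) (tens u u - (dot u u / 2) *: 1%:M) (dot u u / 2).

Lemma in_Z_Kpoint p u : in_Z (Kpoint p u).
Proof.
split => /=; first by rewrite raddfB /= linearZ /= tens_tr trmx1.
by rewrite raddfB /= mxtraceZ mxtrace1 tr_tens; field.
Qed.

Lemma Kg_Kpoint p gamma u : dot u u / 2 <= gamma -> Kg p gamma (Kpoint p u).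
Proof. by split; [exact: in_Z_Kpoint | rewrite /= opprB addrC subrK | |]. Qed.

(* The witness is xi orthogonal to u1 - u2, with c = - u1.xi = - u2.xi. *)
Lemma Lambda_Kpoint_sub p u1 u2 : u1 != u2 -> Lambda (zsub (Kpoint p u1) (Kpoint p u2)).
Proof.
move=> u12; set x := perp (u1 - u2).
have x_neq0 : x != 0 by apply: contra u12 => /eqP/perp_eq0/subr0_eq/eqP.
have dot_u2 : dot u2 x = dot u1 x.
  by apply/esym/subr0_eq; rewrite -dotBl dot_perp.
split.
- by apply: in_Z_sub; exact: in_Z_Kpoint.
- by case=> /= /subr0_eq/eqP; rewrite (negPf u12).
exists x, (- dot u1 x); split; first by left; apply/eqP.
split; last split => /=.
- have -> : zs (zsub (Kpoint p u1) (Kpoint p u2))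
            + ze (zsub (Kpoint p u1) (Kpoint p u2)) *: 1%:M = tens u1 u1 - tens u2 u2.
    by rewrite /=; apply/matrixP => i j; rewrite !(tensE, mxE); ring.
  by rewrite /= mulmxBl !tens_mulmx dot_u2 -scalerBr scaleNr addrN.
- exact: dot_perp.
- by rewrite dotBl !dotZl dot_u2; ring.
Qed.

Lemma zcomb_Kpoint p (a b : R) v x : 0 < a + b -> dot x x = 1 ->
  zcomb (a / (a + b)) (Kpoint p (v + b *: x)) (Kpoint p (v - a *: x)) =
  mkZ v (((dot v v + a * b) / 2 + p) *: v + (a * b * (b - a + 2 * dot v x) / 2) *: x)
      (tens v v - ((dot v v + a * b) / 2) *: 1%:M + (a * b) *: tens x x)
      ((dot v v + a * b) / 2).
Proof.
move=> /lt0r_neq0 ab_neq0 x1.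
rewrite /zcomb /= dot_unit_line // -scaleNr dot_unit_line //.
congr mkZ.
- by apply: cV2P; rewrite !mxE; field.
- by apply: cV2P; rewrite !mxE; field.
- by apply/matrixP => i j; rewrite !(tensE, mxE); field.
- by field.
Qed.

Lemma KLambda1_rank_one p gamma (e n : R) v x :
  dot x x = 1 -> 0 < 2 * e - dot v v -> 0 < n -> e < gamma ->
  (let mu := (2 * gamma - dot v v) / ((gamma - e) * (2 * e - dot v v)) * n in
   mu ^+ 2 - 2 * mu * dot v x + dot v v <= 2 * gamma) ->
  KLambda1 p gamma (mkZ v ((e + p) *: v + n *: x)
                        (tens v v - e *: 1%:M + (2 * e - dot v v) *: tens x x) e).
Proof.
move=> x1 D_gt0 n_gt0 e_lt_gamma /=; set c := dot v x => mu_bound.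
(* ab is the weight of x (x) x in sigma, and then ab(b - a + 2c)/2 = n is
   the weight of x in m. *)
have [a [b [a_gt0 b_gt0 abE baE]]] :=
  exists_pos_mul_sub (2 * n / (2 * e - dot v v) - 2 * c) D_gt0.
have K_gt0 : 0 < b - a + 2 * c by rewrite baE addrNK !mulr_gt0 ?invr_gt0.
have nE : n = a * b * (b - a + 2 * c) / 2.
  by rewrite abE baE addrNK; field; rewrite gt_eqF.
have eE : e = (dot v v + a * b) / 2 by rewrite abE; field.
right; exists (Kpoint p (v + b *: x)), (Kpoint p (v - a *: x)), (a / (a + b)).
split.
- apply: Kg_Kpoint; rewrite dot_unit_line // -/c.
  have G_gt0 : 0 < gamma - e by rewrite subr_gt0.
  have mu_eq : (2 * (gamma - e) + a * b) * (b - a + 2 * c) / (2 * (gamma - e))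
              = (2 * gamma - dot v v) / ((gamma - e) * (2 * e - dot v v)) * n.
    by rewrite -abE nE eE; field; rewrite !gt_eqF //; nra.
  have : b * (b - a + 2 * c) <= 2 * (gamma - e).
    by apply: endpoint_energy_le => //=; rewrite mu_eq; lra.
  lra.
- apply: Kg_Kpoint; rewrite -scaleNr dot_unit_line // -/c.
  by have := mulr_gt0 a_gt0 K_gt0; nra.
- by rewrite divr_ge0 ?ler_pdivrMr ?addr_gt0 //=; lra.
- apply/Lambda_Kpoint_sub/eqP => /(congr1 (fun w => dot w x)).
  by rewrite /= dotDl dotBl !dotZl x1; lra.
- by rewrite zcomb_Kpoint ?addr_gt0 // -eE -nE abE.
Qed.

End Plane.

Theorem lemma2p9 (R : realType) (p gamma : R) (z : Zpt R) :
  0 < gamma ->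
  in_Z z ->
  zm z <> (ze z + p) *: zv z ->
  0 < 2 * ze z - vnorm (zv z) ^+ 2 ->
  Mz p z = 0 ->
  ze z < gamma ->
  vnorm (((2 * gamma - vnorm (zv z) ^+ 2)
            / ((gamma - ze z) * (2 * ze z - vnorm (zv z) ^+ 2)))
           *: defect p z - zv z)
    <= Num.sqrt (2 * gamma) ->
  KLambda1 p gamma z.
Proof.
move=> gamma_gt0 _ m_neq D_gt0 /zs_of_Mz_eq0 s_eq e_lt_gamma bound.
have d_neq0 : defect p z != 0 by rewrite subr_eq0; apply/eqP.
have m_eq : zm z = (ze z + p) *: zv z + vnorm (defect p z) *: Defs.eta p z.
  by rewrite -defect_eta // addrC subrK.
rewrite defect_eta // scalerA in bound.
move: (vnorm_gt0 d_neq0) (dot_eta d_neq0) m_eq s_eq bound.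
rewrite vnorm_sqr in D_gt0 *.
move: (vnorm (defect p z)) (Defs.eta p z) => n x.
case: z D_gt0 e_lt_gamma {m_neq d_neq0} => v m s e /= D_gt0 e_lt n_gt0 x1 -> -> bound.
apply: KLambda1_rank_one => //=.
move: bound; rewrite -[_ - v]opprB vnormN -scaleNr /vnorm ler_sqrt ?dot_unit_line //; lra.
Qed.
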